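(* There exist deterministic multi-robot transition systems $S$ and $\widehat{S}$ and an integer $m$ such that $\widehat{S}$ is an $m$-illusion of $S$, but there is no $\tau$ for which $\widehat{S}$ is an $(m,\tau)$-illusion of $S$.
   Context: A deterministic multi-robot transition system is a 7-tuple $(n,X,U,f,Y,h,x_0)$ where $n$ is a positive integer (the number of robots); $X=X^{(1)}\times\cdots\times X^{(n)}$ is the state space; $U=U^{(1)}\times\cdots\times U^{(n)}$ is the action space; $f:X\times U\to X$ is the transition function given by robot transition functions $f^{(i)}$ via $f(x,(u^{(1)},\dots,u^{(n)}))=(f^{(1)}(x,u^{(1)}),\dots,f^{(n)}(x,u^{(n)}))$; $Y=Y^{(1)}\times\cdots\times Y^{(n)}$ is the observation space; $h:X\to Y$ is given by robot observation functions via $h(x)=(h^{(1)}(x),\dots,h^{(n)}(x))$; and $x_0\in X$ is the initial state. The system evolves in discrete time by $x_{k+1}=f(x_k,u_k)$, $y_k=h(x_k)$. When a primary system $\widehat{S}$ (hatted quantities) emulates a secondary system $S$, a robot policy $\widehat{\pi}^{(i)}$ for robot $i$ of $\widehat{S}$ maps robot $i$'s own action history $\widehat{u}^{(i)}_0,\dots,\widehat{u}^{(i)}_k$, its observation history $\widehat{y}^{(i)}_0,\dots,\widehat{y}^{(i)}_k$, and the state history $x_0,\dots,x_\ell$ of the secondary system (with $\ell$ possibly different from $k$) to an action $\widehat{u}^{(i)}_k$. Robot policies in $S$ choose actions from histories in the same manner. For systems $S$ and $\widehat{S}$ and an integer $0<m\le n$, $\widehat{S}$ is an $m$-illusion of $S$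 if there exist (i) robot policies $\widehat{\pi}^{(1)},\dots,\widehat{\pi}^{(\widehat{n})}$ in $\widehat{S}$, (ii) a strictly increasing function $z:\mathbb{Z}^+\to\mathbb{Z}^+$, and (iii) an infinite sequence of functions $\rho_k:\{1,\dots,m\}\to\{1,\dots,\widehat{n}\}$, such that for any robot policies $\pi^{(1)},\dots,\pi^{(n)}$ in $S$, for all $k\ge0$ and all $1\le i\le m$, $h^{(i)}(x_k)=\widehat{h}^{(\rho_k(i))}(\widehat{x}_{z(k)})$. The tuple $(\widehat{\pi},(\rho_k),z)$ is a witness. $\widehat{S}$ is an $(m,\tau)$-illusion of $S$ if it is an $m$-illusion with a witness for which the sequence $z(2)-z(1),z(3)-z(2),\dots$ is bounded above by $\tau$. *)

From mathcomp Require Import all_boot.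
Set Implicit Arguments. Unset Strict Implicit. Unset Printing Implicit Defensive.

(* All robot observations take values in a common type [Obs], so that the
   illusion condition  h^(i)(x_k) = hhat^(rho_k(i))(xhat_(z k))  is a
   well-typed equality; Y^(i) may be thought of as the range of h^(i). *)
Record MRTS (Obs : Type) := {
  nrob : nat;
  Xr   : 'I_nrob -> Type;
  Ur   : 'I_nrob -> Type;
  fr   : forall i : 'I_nrob, (forall j, Xr j) -> Ur i -> Xr i;
  hr   : 'I_nrob -> (forall j, Xr j) -> Obs;
  x0r  : forall j, Xr j
}.

Arguments nrob {Obs} m.
Arguments Xr {Obs} m i.
Arguments Ur {Obs} m i.
Arguments fr {Obs} m i x u.
Arguments hr {Obs} m i x.
Arguments x0r {Obs} m j.

Section Runs.
Variable Obs : Type.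

Definition state (S : MRTS Obs) := forall j, Xr S j.

(* Robot policies of a system S (used standalone): from own action history
   u_0..u_{k-1} and own observation history y_0..y_k to u_k. *)
Definition spolicy (S : MRTS Obs) :=
  forall i : 'I_(nrob S), seq (Ur S i) -> seq Obs -> Ur S i.

(* Robot policies of a primary system Sh emulating S: additionally receive
   the state history x_0..x_l of the secondary system S. *)
Definition ppolicy (S Sh : MRTS Obs) :=
  forall i : 'I_(nrob Sh), seq (Ur Sh i) -> seq Obs -> seq (state S) -> Ur Sh i.

Fixpoint run (S : MRTS Obs)
  (pol : nat -> forall i : 'I_(nrob S), seq (Ur S i) -> seq Obs -> Ur S i)
  (k : nat) : seq (state S) * (forall i, seq (Ur S i)) :=
  match k with
  | 0 => ([:: x0r S], fun i => [::])
  | k'.+1 =>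
      let (xs, us) := run pol k' in
      let x := last (x0r S) xs in
      let a := fun i => pol k' i (us i) (map (hr S i) xs) in
      (rcons xs (fun i => fr S i x (a i)), fun i => rcons (us i) (a i))
  end.

Definition traj (S : MRTS Obs) pol (k : nat) : state S :=
  last (x0r S) (run pol k).1.

Definition strajS (S : MRTS Obs) (pi : spolicy S) (k : nat) : state S :=
  traj (fun _ => pi) k.

(* Index l of the secondary state history available to the primary robots at
   primary time k: x_0 is always known, and x_{j+1} becomes known once x_j has
   been displayed, i.e. at primary time z j. *)
Definition known_idx (z : nat -> nat) (k : nat) : nat :=
  count (fun j => z j <= k) (iota 0 k.+1).

Definition trajP (S Sh : MRTS Obs) (pi : spolicy S) (pih : ppolicy S Sh)
  (z : nat -> nat) (k : nat) : state Sh :=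
  traj (fun t i us ys =>
          pih i us ys [seq strajS pi j | j <- iota 0 (known_idx z t).+1]) k.

(* (pih, (rho_k), z) is a witness that Sh is an m-illusion of S.
   Robots 1..m of S are the indices i : 'I_(nrob S) with i < m. *)
Definition illusion_witness (S Sh : MRTS Obs) (m : nat)
  (pih : ppolicy S Sh) (rho : nat -> 'I_(nrob S) -> 'I_(nrob Sh))
  (z : nat -> nat) : Prop :=
  (forall k, z k < z k.+1) /\
  forall (pi : spolicy S) (k : nat) (i : 'I_(nrob S)), i < m ->
    hr S i (strajS pi k) = hr Sh (rho k i) (trajP pi pih z (z k)).

Definition is_illusion (S Sh : MRTS Obs) (m : nat) : Prop :=
  0 < m <= nrob S /\
  exists pih rho z, @illusion_witness S Sh m pih rho z.

Definition is_tau_illusion (S Sh : MRTS Obs) (m tau : nat) : Prop :=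
  0 < m <= nrob S /\
  exists pih rho z, @illusion_witness S Sh m pih rho z /\
    forall k, 1 <= k -> z k.+1 - z k <= tau.

End Runs.

From mathcomp Require Import all_boot.
From mathcomp Require Import zify.

(* Both systems are a single robot counting the time steps; the secondary one
   displays [f k] at time [k], the primary one displays its own clock.  To show
   [f k] at primary time [z k], the primary system must be at time [z k = f k],
   whatever its policy.  With [f k = k ^ 2] this time map is strictly
   increasing, but its gaps [2 k + 1] are unbounded. *)

Definition counter (f : nat -> nat) : MRTS nat :=
  {| nrob := 1; Xr := fun _ => nat; Ur := fun _ => unit;
     fr := fun i x _ => (x i).+1; hr := fun _ x => f (x ord0);
     x0r := fun _ => 0 |}.

Lemma traj_counter f pol k (i : 'I_1) : traj (S := counter f) pol k i = k.
Proof.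
elim: k i => [|k IHk] i //.
move: IHk; rewrite /traj /=; case: (run pol k) => xs us /= IHk.
by rewrite last_rcons IHk.
Qed.

Lemma hr_strajS_counter f pi k (i : 'I_1) :
  hr (counter f) i (strajS pi k) = f k.
Proof. by rewrite /= /strajS traj_counter. Qed.

Lemma hr_trajP_counter f g pi pih z k (i : 'I_1) :
  hr (counter g) i (trajP (S := counter f) pi pih z k) = g k.
Proof. by rewrite /= /trajP traj_counter. Qed.

Lemma counter_illusion_witness f pih :
  (forall k, f k < f k.+1) ->
  illusion_witness (S := counter f) (Sh := counter id) 1 pih (fun _ i => i) f.
Proof.
move=> f_incr; split=> // pi k i _.
by rewrite hr_strajS_counter hr_trajP_counter.
Qed.

Lemma counter_illusion_timeE f pih rho z :
  illusion_witness (S := counter f) (Sh := counter id) 1 pih rho z -> z =1 f.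
Proof.
move=> [_ obsE] k; pose pi : spolicy (counter f) := fun _ _ _ => tt.
by have := obsE pi k ord0 isT; rewrite hr_strajS_counter hr_trajP_counter.
Qed.

Definition squaring_counter : MRTS nat := counter (fun k => k ^ 2).

Lemma squaring_counter_illusion : is_illusion squaring_counter (counter id) 1.
Proof.
split=> //; exists (fun _ _ _ _ => tt), (fun _ i => i), (fun k => k ^ 2).
by apply: counter_illusion_witness => k; rewrite ltn_sqr.
Qed.

Lemma squaring_counter_no_tau_illusion tau :
  ~ is_tau_illusion squaring_counter (counter id) 1 tau.
Proof.
move=> [_ [pih [rho [z [/counter_illusion_timeE zE gap_le]]]]].
by have := gap_le tau.+1 isT; rewrite !zE /=; lia.
Qed.

Theorem theorem4 :
  exists (Obs : Type) (S Sh : MRTS Obs) (m : nat),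
    is_illusion S Sh m /\ ~ (exists tau : nat, is_tau_illusion S Sh m tau).
Proof.
exists nat, squaring_counter, (counter id), 1; split.
  exact: squaring_counter_illusion.
by move=> [tau]; apply: squaring_counter_no_tau_illusion.
Qed.
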